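(* For every state $x$, \[ \Psi_1(x) \le \Psi_0(x) + \sqrt{\Psi_0(x)\cdot\frac{n}{\bar s_h}} + \frac{n}{4}\left(\frac{1}{\bar s_h}-\frac{1}{\bar s_a}\right). \]
   Context: There are $n$ processors with speeds $s_i>0$, $\mathcal{S}=\sum_i s_i$, arithmetic mean $\bar s_a=\mathcal{S}/n$ and harmonic mean $\bar s_h=n/\sum_i (1/s_i)$. There are $m$ unit tasks; a state $x$ assigns each task to a processor and $w_i(x)$ is the number of tasks on processor $i$. $\Psi_0(x)=\sum_i (w_i(x)-m s_i/\mathcal{S})^2/s_i$ and $\Psi_1(x)=\sum_i \frac{w_i(x)(w_i(x)+1)}{s_i}-\frac{m^2}{\mathcal{S}}-\frac{mn}{\mathcal{S}}+\frac{n}{4}\left(\frac{1}{\bar s_h}-\frac{1}{\bar s_a}\right)$. *)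

From HB Require Import structures.
From mathcomp Require Import all_boot all_order all_algebra.
Set Implicit Arguments. Unset Strict Implicit. Unset Printing Implicit Defensive.
Import Order.TTheory GRing.Theory Num.Theory.
Local Open Scope ring_scope.

Section Defs.
Variables (R : rcfType) (n m : nat) (s : 'I_n -> R).

Definition Stot : R := \sum_(i < n) s i.
Definition s_a : R := Stot / n%:R.
Definition s_h : R := n%:R / (\sum_(i < n) (s i)^-1).

(* a state assigns each of the m unit tasks to one of the n processors *)
Definition load (x : {ffun 'I_m -> 'I_n}) (i : 'I_n) : nat :=
  #|[set t : 'I_m | x t == i]|.

Definition Psi0 (x : {ffun 'I_m -> 'I_n}) : R :=
  \sum_(i < n) ((load x i)%:R - m%:R * s i / Stot) ^+ 2 / s i.

Definition Psi1 (x : {ffun 'I_m -> 'I_n}) : R :=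
  \sum_(i < n) ((load x i)%:R * ((load x i)%:R + 1)) / s i
  - m%:R ^+ 2 / Stot - m%:R * n%:R / Stot
  + n%:R / 4 * (s_h^-1 - s_a^-1).
End Defs.

From HB Require Import structures.
From mathcomp Require Import all_boot all_order all_algebra.
From mathcomp Require Import ring.
Import Order.TTheory GRing.Theory Num.Theory.
Local Open Scope ring_scope.

(* Write d_i := w_i - m s_i / S for the deviation of the load from the fair
   share.  Expanding the squares (using sum_i w_i = m and sum_i s_i = S) gives
   Psi1 = Psi0 + sum_i d_i / s_i + n/4 (1/s_h - 1/s_a), and by the weighted
   Cauchy-Schwarz inequality with weights 1/s_i the middle sum is at most
   sqrt(Psi0 * sum_i 1/s_i) = sqrt(Psi0 * n / s_h). *)

Lemma sum_load (n m : nat) (x : {ffun 'I_m -> 'I_n}) :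
  (\sum_(i < n) load x i)%N = m.
Proof.
rewrite -[RHS](card_ord m) -sum1_card (partition_big x xpredT) //=.
apply: eq_bigr => i _; rewrite /load -sum1_card; apply: eq_bigl => t.
by rewrite inE.
Qed.

Lemma weighted_cauchy_schwarz (R : realDomainType) (I : finType)
    (u d : I -> R) :
  (forall i, 0 <= u i) ->
  (\sum_i d i * u i) ^+ 2 <= (\sum_i d i ^+ 2 * u i) * \sum_i u i.
Proof.
move=> u_ge0; set A := \sum_i d i ^+ 2 * u i; set B := \sum_i u i.
set C := \sum_i d i * u i.
have B_ge0 : 0 <= B by apply: sumr_ge0.
(* 0 <= sum_i u_i (B d_i - C)^2 = B (A B - C^2) *)
have : 0 <= B * (A * B - C ^+ 2).
  have -> : B * (A * B - C ^+ 2) = \sum_i (B * d i - C) ^+ 2 * u i.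
    rewrite [RHS](eq_bigr (fun i => B ^+ 2 * (d i ^+ 2 * u i)
                    - (2 * B * C) * (d i * u i) + C ^+ 2 * u i)).
      by rewrite /A /B /C !big_split /= sumrN -!mulr_sumr; ring.
    by move=> i _; ring.
  by apply: sumr_ge0 => i _; rewrite mulr_ge0 ?sqr_ge0.
have [B0 _ | B_gt0] := eqVneq B 0; last first.
  by rewrite pmulr_rge0 ?lt_def ?B_gt0 // subr_ge0.
have u0 i : u i = 0 by apply: (psumr_eq0P (fun i _ => u_ge0 i) B0).
by rewrite /C big1 ?expr0n //= ?B0 ?mulr0 // => i _; rewrite u0 mulr0.
Qed.

Section LoadBalancing.
Variables (R : rcfType) (n m : nat) (s : 'I_n -> R).
Hypotheses (n_gt0 : (0 < n)%N) (s_gt0 : forall i, 0 < s i).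

Let s_neq0 i : s i != 0. Proof. by rewrite gt_eqF. Qed.

Lemma Stot_gt0 : 0 < Stot s.
Proof.
rewrite /Stot (bigD1 (Ordinal n_gt0)) //=; apply: ltr_pwDl => //.
by apply: sumr_ge0 => i _; rewrite ltW.
Qed.

Lemma natr_div_s_h : n%:R / s_h s = \sum_(i < n) (s i)^-1.
Proof.
have n_neq0 : n%:R != 0 :> R by rewrite pnatr_eq0 -lt0n.
by rewrite /s_h invf_div; field.
Qed.

Definition deviation (x : {ffun 'I_m -> 'I_n}) (i : 'I_n) : R :=
  (load x i)%:R - m%:R * s i / Stot s.

Lemma Psi0E x : Psi0 s x = \sum_(i < n) deviation x i ^+ 2 / s i.
Proof. by []. Qed.

Lemma Psi1E x :
  Psi1 s x = Psi0 s x + \sum_(i < n) deviation x i / s i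
             + n%:R / 4 * ((s_h s)^-1 - (s_a s)^-1).
Proof.
have S_neq0 : Stot s != 0 by rewrite gt_eqF ?Stot_gt0.
pose w i : R := (load x i)%:R.
have sum_w : \sum_(i < n) w i = m%:R by rewrite -natr_sum sum_load.
rewrite /Psi1 Psi0E.
rewrite (eq_bigr (fun i => deviation x i ^+ 2 / s i + deviation x i / s i
            + (2 * m%:R / Stot s) * w i - (m%:R / Stot s) ^+ 2 * s i
            + m%:R / Stot s)); last first.
  by move=> i _; rewrite /deviation /w; field; rewrite s_neq0 S_neq0.
rewrite !big_split /= sumrN -!mulr_sumr sum_w -/(Stot s) sumr_const card_ord.
by rewrite -[_ *+ n]mulr_natr; congr (_ + _); field.
Qed.

Lemma sum_deviation_le x :
  \sum_(i < n) deviation x i / s i <= Num.sqrt (Psi0 s x * (n%:R / s_h s)).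
Proof.
rewrite natr_div_s_h Psi0E; apply: le_trans (ler_norm _) _.
rewrite -sqrtr_sqr ler_wsqrtr // weighted_cauchy_schwarz // => i.
by rewrite invr_ge0 ltW.
Qed.

End LoadBalancing.

Theorem lemma26 (R : rcfType) (n m : nat) (s : 'I_n -> R)
  (hn : (0 < n)%N) (hs : forall i, 0 < s i) (x : {ffun 'I_m -> 'I_n}) :
  Psi1 s x <= Psi0 s x + Num.sqrt (Psi0 s x * (n%:R / s_h s))
              + n%:R / 4 * ((s_h s)^-1 - (s_a s)^-1).
Proof. by rewrite Psi1E // lerD2r lerD2l sum_deviation_le. Qed.
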